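(* Let $X$ be a nonempty set, $\sigma(X)$ an algebra on $X$, $z_1\neq z_2$ complex numbers, and $f:\sigma(X)\to\{z_1,z_2\}$ a surjection such that $f(A)+f(B)=f(A\cup B)+f(A\cap B)$ for all $A,B\in\sigma(X)$. Then: (1) for each $A\in\sigma(X)$, $\{f(A),f(X\setminus A)\}=\{z_1,z_2\}$ (in particular $f(\varnothing)\ne f(X)$); (2) if $Y\in f^{-1}(f(\varnothing))$ and $A\in\sigma(X)$ with $A\subseteq Y$, then $A\in f^{-1}(f(\varnothing))$; and if $U\in f^{-1}(f(X))$ and $V\in\sigma(X)$ with $U\subseteq V$, then $V\in f^{-1}(f(X))$; (3) each of $f^{-1}(z_1)$ and $f^{-1}(z_2)$ is closed under finite intersections and finite unions.
   Context: An algebra $\sigma(X)$ on a nonempty set $X$ is a family of subsets of $X$ containing $\varnothing$ and $X$ and closed under finite unions and complements (hence also under finite intersections). *)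

From Stdlib Require Import Reals.
Open Scope R_scope.

Definition Cpx : Type := (R * R)%type.
Definition Cadd (z w : Cpx) : Cpx := (fst z + fst w, snd z + snd w).

Definition set0 {X : Type} : X -> Prop := fun _ => False.
Definition setT {X : Type} : X -> Prop := fun _ => True.
Definition setU {X : Type} (A B : X -> Prop) : X -> Prop := fun x => A x \/ B x.
Definition setI {X : Type} (A B : X -> Prop) : X -> Prop := fun x => A x /\ B x.
Definition setC {X : Type} (A : X -> Prop) : X -> Prop := fun x => ~ A x.
Definition subset {X : Type} (A B : X -> Prop) : Prop := forall x, A x -> B x.

Definition is_algebra {X : Type} (S : (X -> Prop) -> Prop) : Prop :=
  S set0 /\ S setT /\
  (forall A B, S A -> S B -> S (setU A B)) /\
  (forall A, S A -> S (setC A)).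

From Stdlib Require Import Reals Lra Classical FunctionalExtensionality PropExtensionality.

(* Modularity says that {f A, f B} = {f (A ∪ B), f (A ∩ B)} as multisets,
   because a sum of two values from {z1, z2} determines the pair.  Applied to
   A and its complement this gives {f A, f (X \ A)} = {f ∅, f X}, and
   surjectivity forces f ∅ ≠ f X.  Monotonicity follows by applying
   modularity to A and X \ Y, whose intersection is empty. *)

Lemma set_ext {X : Type} (A B : X -> Prop) : (forall x, A x <-> B x) -> A = B.
Proof.
  intro H; apply functional_extensionality; intro x.
  apply propositional_extensionality; auto.
Qed.

Lemma setUCr {X : Type} (A : X -> Prop) : setU A (setC A) = setT.
Proof.
  apply set_ext; intro x; unfold setU, setC, setT.
  split; [auto | intros _; apply classic].
Qed.

Lemma setICr {X : Type} (A : X -> Prop) : setI A (setC A) = set0.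
Proof. apply set_ext; intro x; unfold setI, setC, set0; tauto. Qed.

Lemma setI_setC_empty {X : Type} (A Y : X -> Prop) :
  subset A Y -> setI A (setC Y) = set0.
Proof.
  intro sAY; apply set_ext; intro x; unfold setI, setC, set0.
  split; [intros [hA hY]; exact (hY (sAY x hA)) | tauto].
Qed.

Lemma algebra_setI {X : Type} (S : (X -> Prop) -> Prop) (A B : X -> Prop) :
  is_algebra S -> S A -> S B -> S (setI A B).
Proof.
  intros [_ [_ [hU hC]]] hA hB.
  replace (setI A B) with (setC (setU (setC A) (setC B))); auto.
  apply set_ext; intro x; unfold setI, setU, setC.
  split; [intro h; split; apply NNPP; tauto | tauto].
Qed.

Lemma Cadd_two_valued_perm (z1 z2 a b c d : Cpx) : z1 <> z2 ->
  (a = z1 \/ a = z2) -> (b = z1 \/ b = z2) ->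
  (c = z1 \/ c = z2) -> (d = z1 \/ d = z2) ->
  Cadd a b = Cadd c d -> (a = c /\ b = d) \/ (a = d /\ b = c).
Proof.
  intros hz ha hb hc hd E.
  destruct ha, hb, hc, hd; subst; auto; exfalso; apply hz;
    destruct z1 as [p q], z2 as [r s]; unfold Cadd in E; simpl in E;
    injection E; intros; f_equal; lra.
Qed.

Section TwoValuedModular.

Variables (X : Type) (S : (X -> Prop) -> Prop) (f : (X -> Prop) -> Cpx) (z1 z2 : Cpx).
Hypothesis hS : is_algebra S.
Hypothesis hz : z1 <> z2.
Hypothesis hrange : forall A, S A -> f A = z1 \/ f A = z2.
Hypothesis hmod : forall A B, S A -> S B ->
  Cadd (f A) (f B) = Cadd (f (setU A B)) (f (setI A B)).

Lemma f_setU_setI A B : S A -> S B ->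
  (f A = f (setU A B) /\ f B = f (setI A B)) \/
  (f A = f (setI A B) /\ f B = f (setU A B)).
Proof.
  intros hA hB.
  assert (hAB : S (setU A B)) by (apply hS; assumption).
  assert (hBA : S (setI A B)) by (apply algebra_setI; assumption).
  apply (Cadd_two_valued_perm z1 z2); auto.
Qed.

Lemma f_setU_setI_eq z A B : S A -> S B -> f A = z -> f B = z ->
  f (setU A B) = z /\ f (setI A B) = z.
Proof.
  intros hA hB fA fB.
  destruct (f_setU_setI A B hA hB) as [[u i] | [i u]]; split; congruence.
Qed.

Lemma f_setC A : S A ->
  (f A = f setT /\ f (setC A) = f set0) \/ (f A = f set0 /\ f (setC A) = f setT).
Proof.
  intro hA; destruct hS as [_ [_ [_ hC]]].
  rewrite <- (setUCr A), <- (setICr A).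
  exact (f_setU_setI A (setC A) hA (hC A hA)).
Qed.

Lemma f_set0_neq_setT :
  (exists A, S A /\ f A = z1) -> (exists A, S A /\ f A = z2) -> f set0 <> f setT.
Proof.
  intros [A1 [hA1 fA1]] [A2 [hA2 fA2]] E.
  destruct hS as [h0 _].
  destruct (hrange set0 h0) as [e | e].
  - destruct (f_setC A2 hA2) as [[u _] | [u _]]; congruence.
  - destruct (f_setC A1 hA1) as [[u _] | [u _]]; congruence.
Qed.

Hypothesis h0T : f set0 <> f setT.

Lemma f_setC_values A : S A ->
  (f A = z1 /\ f (setC A) = z2) \/ (f A = z2 /\ f (setC A) = z1).
Proof.
  intro hA; destruct hS as [h0 [hT _]].
  destruct (f_setC A hA) as [[u v] | [u v]];
    destruct (hrange set0 h0) as [e | e], (hrange setT hT) as [t | t];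
    solve [congruence | left; split; congruence | right; split; congruence].
Qed.

Lemma f_subset_set0 Y A : S Y -> f Y = f set0 -> S A -> subset A Y -> f A = f set0.
Proof.
  intros hY fY hA sAY.
  destruct hS as [_ [_ [_ hC]]].
  destruct (f_setC Y hY) as [[u _] | [_ fCY]]; [congruence |].
  destruct (f_setC A hA) as [[fA _] | [fA _]]; [exfalso | exact fA].
  apply h0T.
  destruct (f_setU_setI A (setC Y) hA (hC Y hY)) as [[_ w] | [w _]];
    rewrite (setI_setC_empty A Y sAY) in w; congruence.
Qed.

Lemma f_supset_setT U V : S U -> f U = f setT -> S V -> subset U V -> f V = f setT.
Proof.
  intros hU fU hV sUV.
  destruct (f_setC V hV) as [[fV _] | [fV _]]; [exact fV | exfalso].
  apply h0T; rewrite <- fU; symmetry.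
  exact (f_subset_set0 V U hV fV hU sUV).
Qed.

End TwoValuedModular.

Theorem lemma3 (X : Type) (S : (X -> Prop) -> Prop) (z1 z2 : Cpx)
  (f : (X -> Prop) -> Cpx)
  (hX : inhabited X)
  (hS : is_algebra S)
  (hz : z1 <> z2)
  (hrange : forall A, S A -> f A = z1 \/ f A = z2)
  (hsurj1 : exists A, S A /\ f A = z1)
  (hsurj2 : exists A, S A /\ f A = z2)
  (hmod : forall A B, S A -> S B ->
            Cadd (f A) (f B) = Cadd (f (setU A B)) (f (setI A B))) :
  (* (1) *)
  (forall A, S A ->
     (f A = z1 /\ f (setC A) = z2) \/ (f A = z2 /\ f (setC A) = z1)) /\
  f set0 <> f setT /\
  (* (2) *)
  (forall Y A, S Y -> f Y = f set0 -> S A -> subset A Y -> f A = f set0) /\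
  (forall U V, S U -> f U = f setT -> S V -> subset U V -> f V = f setT) /\
  (* (3) *)
  (forall z, (z = z1 \/ z = z2) ->
     forall A B, S A -> f A = z -> S B -> f B = z ->
       f (setU A B) = z /\ f (setI A B) = z).
Proof.
  pose proof f_set0_neq_setT X S f z1 z2 hS hz hrange hmod hsurj1 hsurj2 as h0T.
  split; [| split; [exact h0T | split; [| split]]].
  - exact (f_setC_values X S f z1 z2 hS hz hrange hmod h0T).
  - exact (f_subset_set0 X S f z1 z2 hS hz hrange hmod h0T).
  - exact (f_supset_setT X S f z1 z2 hS hz hrange hmod h0T).
  - intros z _ A B hA fA hB fB.
    exact (f_setU_setI_eq X S f z1 z2 hS hz hrange hmod z A B hA hB fA fB).
Qed.
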